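(* Let $(f,\bar f)\colon(G,P_G)\to(H,P_H)$ be a regular epimorphism in $\mathsf{PreOrdGrp}$. Then $\bar f\colon P_G\to P_H$ is a special homogeneous surjection in the category $\mathsf{Mon}$ of monoids if and only if for all $x,y\in P_G$ with $f(x)=f(y)$ one has $y-x\in P_G$ and $-x+y\in P_G$.
   Context: A preordered group is a pair $(G,P_G)$ with $G$ an additively written group (not necessarily abelian) and $P_G\subseteq G$ a submonoid closed under conjugation; a morphism $(f,\bar f)$ is a group homomorphism $f$ with $f(P_G)\subseteq P_H$, $\bar f$ its restriction to positive cones. This is $\mathsf{PreOrdGrp}$; its regular epimorphisms are the morphisms with $f$ and $\bar f$ both surjective. A split epimorphism of monoids $g\colon X\to Y$ with section $s$ and kernel $K=g^{-1}(0)$ is homogeneous if for every $y\in Y$ the maps $K\to g^{-1}(y)$, $x\mapsto x+s(y)$ and $x\mapsto s(y)+x$, are bijections. A surjective monoid homomorphism $g\colon X\to Y$ is a special homogeneous surjection if the first projection $\pi_1\colon Eq(g)\to X$ of its kernel pair $Eq(g)=\{(x,x')\in X\times X: g(x)=g(x')\}$, with section the diagonal $x\mapsto(x,x)$, is a homogeneous split epimorphism. *)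

(* Groups are not assumed abelian, so we use our own records. *)
From Stdlib Require Import ProofIrrelevance.
Set Implicit Arguments.

Record Group := {
  gcar :> Type;
  gadd : gcar -> gcar -> gcar;
  gopp : gcar -> gcar;
  gzero : gcar;
  gaddA : forall x y z, gadd x (gadd y z) = gadd (gadd x y) z;
  gadd0l : forall x, gadd gzero x = x;
  gadd0r : forall x, gadd x gzero = x;
  gaddNl : forall x, gadd (gopp x) x = gzero;
  gaddNr : forall x, gadd x (gopp x) = gzero }.
Arguments gadd {g}. Arguments gopp {g}. Arguments gzero {g}.

Definition is_group_hom (G H : Group) (f : G -> H) : Prop :=
  forall a b, f (gadd a b) = gadd (f a) (f b).
Arguments is_group_hom {G H}.

(* ---------- preordered groups: positive cone = conjugation-closed submonoid *)
Record PreOrdGrp := {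
  pgrp :> Group;
  pos : pgrp -> Prop;
  pos0 : pos gzero;
  posD : forall x y, pos x -> pos y -> pos (gadd x y);
  posJ : forall g x, pos x -> pos (gadd (gadd g x) (gopp g)) }.
Arguments pos {p}. Arguments posD {p x y}. Arguments pos0 {p}.

Record Monoid := {
  mcar :> Type;
  mop : mcar -> mcar -> mcar;
  munit : mcar;
  mopA : forall x y z, mop x (mop y z) = mop (mop x y) z;
  mop1l : forall x, mop munit x = x;
  mop1r : forall x, mop x munit = x }.
Arguments mop {m}. Arguments munit {m}.

Definition is_monoid_hom (X Y : Monoid) (f : X -> Y) : Prop :=
  f munit = munit /\ forall a b, f (mop a b) = mop (f a) (f b).
Arguments is_monoid_hom {X Y}.

Definition surjective (A B : Type) (f : A -> B) : Prop := forall b, exists a, f a = b.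

Lemma sig_eq_pi (A : Type) (P : A -> Prop) (a b : sig P) :
  proj1_sig a = proj1_sig b -> a = b.
Proof.
  destruct a as [a pa], b as [b pb]; simpl; intros ->.
  f_equal; apply proof_irrelevance.
Qed.

Definition pos_op (G : PreOrdGrp) (a b : {x : G | pos x}) : {x : G | pos x} :=
  exist _ (gadd (proj1_sig a) (proj1_sig b)) (posD (proj2_sig a) (proj2_sig b)).

Definition PosMonoid (G : PreOrdGrp) : Monoid.
Proof.
  refine (@Build_Monoid {x : G | pos x} (@pos_op G) (exist _ gzero (@pos0 G)) _ _ _);
  intros; apply sig_eq_pi; simpl.
  - apply gaddA.
  - apply gadd0l.
  - apply gadd0r.
Defined.

Definition fbar (G H : PreOrdGrp) (f : G -> H) (hp : forall x, pos x -> pos (f x))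
  (a : PosMonoid G) : PosMonoid H :=
  exist _ (f (proj1_sig a)) (hp _ (proj2_sig a)).

Section KernelPair.
Variables (X Y : Monoid) (g : X -> Y) (hg : @is_monoid_hom X Y g).

Definition eqg_op (a b : {p : X * X | g (fst p) = g (snd p)}) :
  {p : X * X | g (fst p) = g (snd p)}.
Proof.
  refine (exist _ (mop (fst (proj1_sig a)) (fst (proj1_sig b)),
                   mop (snd (proj1_sig a)) (snd (proj1_sig b))) _).
  destruct a as [[a1 a2] ea], b as [[b1 b2] eb]; simpl in *.
  destruct hg as [_ hm]; rewrite !hm, ea, eb; reflexivity.
Defined.

Definition eqg_unit : {p : X * X | g (fst p) = g (snd p)} :=
  exist _ (munit, munit) eq_refl.

Definition EqMonoid : Monoid.
Proof.
  refine (@Build_Monoid {p : X * X | g (fst p) = g (snd p)} eqg_op eqg_unit _ _ _);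
  intros; apply sig_eq_pi; simpl;
  (rewrite !mopA || rewrite !mop1l || rewrite !mop1r); try reflexivity;
  destruct (proj1_sig x); reflexivity.
Defined.

Definition eq_pi1 (p : EqMonoid) : X := fst (proj1_sig p).
Definition eq_diag (x : X) : EqMonoid := exist _ (x, x) eq_refl.
End KernelPair.

Definition bij_on (T : Type) (A B : T -> Prop) (h : T -> T) : Prop :=
  (forall x, A x -> B (h x)) /\
  (forall x x', A x -> A x' -> h x = h x' -> x = x') /\
  (forall z, B z -> exists x, A x /\ h x = z).

Definition homogeneous_split_epi (X Y : Monoid) (g : X -> Y) (s : Y -> X) : Prop :=
  is_monoid_hom g /\ is_monoid_hom s /\ (forall y, g (s y) = y) /\
  forall y : Y,
    bij_on (fun x => g x = munit) (fun x => g x = y) (fun x => mop x (s y)) /\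
    bij_on (fun x => g x = munit) (fun x => g x = y) (fun x => mop (s y) x).

Definition special_homogeneous_surjection (X Y : Monoid) (g : X -> Y) : Prop :=
  exists hg : is_monoid_hom g,
    surjective g /\
    @homogeneous_split_epi (EqMonoid hg) X (@eq_pi1 X Y g hg) (@eq_diag X Y g hg).
Arguments fbar {G H} f hp a.
Arguments surjective {A B}.
Arguments homogeneous_split_epi {X Y}.
Arguments special_homogeneous_surjection {X Y}.

(* In the kernel pair of a monoid morphism g, translating a pair (0, b) of the
   kernel of the first projection by the diagonal element (x, x) amounts to
   translating b by x, from g^-1(0) into the fibre g^-1(g x).  Hence g is a
   special homogeneous surjection exactly when, for every x, both translations
   b |-> b + x and b |-> x + b map g^-1(0) bijectively onto g^-1(g x).  On the
   positive cone of a group these translations always land in the right fibre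
   and are injective by cancellation; they are onto precisely when y - x and
   -x + y are positive for every positive y with f y = f x. *)

Section GroupFacts.
Context {G : Group}.

Lemma gaddrK (a x : G) : gadd (gadd a x) (gopp x) = a.
Proof. rewrite <- gaddA, gaddNr, gadd0r. reflexivity. Qed.

Lemma gaddrNK (a x : G) : gadd (gadd a (gopp x)) x = a.
Proof. rewrite <- gaddA, gaddNl, gadd0r. reflexivity. Qed.

Lemma gaddKr (x a : G) : gadd (gopp x) (gadd x a) = a.
Proof. rewrite gaddA, gaddNl, gadd0l. reflexivity. Qed.

Lemma gaddNKr (x a : G) : gadd x (gadd (gopp x) a) = a.
Proof. rewrite gaddA, gaddNr, gadd0l. reflexivity. Qed.

Lemma gadd_cancel_r (a b c : G) : gadd a c = gadd b c -> a = b.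
Proof.
  intro e. rewrite <- (gaddrK a c), <- (gaddrK b c), e. reflexivity.
Qed.

Lemma gadd_cancel_l (a b c : G) : gadd c a = gadd c b -> a = b.
Proof.
  intro e. rewrite <- (gaddKr c a), <- (gaddKr c b), e. reflexivity.
Qed.

End GroupFacts.

Section GroupHom.
Context {G H : Group} {f : G -> H} (hf : is_group_hom f).

Lemma hom_gzero : f gzero = gzero.
Proof.
  apply (gadd_cancel_r _ _ (f gzero)). rewrite <- hf, !gadd0l. reflexivity.
Qed.

Lemma hom_gopp (x : G) : f (gopp x) = gopp (f x).
Proof.
  apply (gadd_cancel_r _ _ (f x)). rewrite <- hf, !gaddNl. exact hom_gzero.
Qed.

End GroupHom.

Section KernelPairHomogeneity.
Context {X Y : Monoid} {g : X -> Y} (hg : is_monoid_hom g).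

Lemma kernel_pair_split :
  is_monoid_hom (eq_pi1 (hg := hg)) /\ is_monoid_hom (eq_diag hg) /\
  forall x, eq_pi1 (eq_diag hg x) = x.
Proof.
  split; [split; reflexivity|].
  split; [|reflexivity].
  split; [|intros a b]; apply sig_eq_pi; reflexivity.
Qed.

Lemma kernel_pair_translation_bij {x : X} {t : X -> X}
    {T : EqMonoid hg -> EqMonoid hg} (ht : t munit = x)
    (hT : forall p, proj1_sig (T p) = (t (fst (proj1_sig p)), t (snd (proj1_sig p)))) :
  bij_on (fun p => eq_pi1 p = munit) (fun p => eq_pi1 p = x) T <->
  bij_on (fun b => g b = munit) (fun b => g b = g x) t.
Proof.
  assert (g1 : g munit = munit) by apply (proj1 hg).
  unfold eq_pi1. split.
  - intros [_ [inj onto]]. split; [|split].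
    + intros b gb.
      pose proof (proj2_sig (T (exist _ (munit, b) (eq_trans g1 (eq_sym gb))))) as e.
      cbv beta in e. rewrite hT in e. simpl in e. rewrite ht in e. symmetry. exact e.
    + intros b b' gb gb' e.
      assert (eT : T (exist _ (munit, b) (eq_trans g1 (eq_sym gb)))
                 = T (exist _ (munit, b') (eq_trans g1 (eq_sym gb')))).
      { apply sig_eq_pi. rewrite !hT. simpl. rewrite e. reflexivity. }
      apply inj in eT; [|reflexivity|reflexivity].
      exact (f_equal (fun q => snd (proj1_sig q)) eT).
    + intros z gz.
      destruct (onto (exist _ (x, z) (eq_sym gz)) eq_refl) as [p [p1 Tp]].
      exists (snd (proj1_sig p)). split.
      * rewrite <- (proj2_sig p), p1. exact g1.
      * apply (f_equal (fun q => snd (proj1_sig q))) in Tp.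
        rewrite hT in Tp. exact Tp.
  - intros [_ [inj onto]]. split; [|split].
    + intros p p1. rewrite hT. simpl. rewrite p1. exact ht.
    + intros [[a b] ep] [[a' b'] ep'] p1 p1' e. simpl in p1, p1'. subst a a'.
      apply (f_equal (fun q => snd (proj1_sig q))) in e. rewrite !hT in e.
      apply sig_eq_pi. simpl. f_equal.
      apply inj; [rewrite <- g1; symmetry; exact ep
                 | rewrite <- g1; symmetry; exact ep' | exact e].
    + intros [[a z] ez] pa. simpl in pa. subst a.
      destruct (onto z (eq_sym ez)) as [b [gb tb]].
      exists (exist _ (munit, b) (eq_trans g1 (eq_sym gb))). split; [reflexivity|].
      apply sig_eq_pi. rewrite hT. simpl. rewrite ht, tb. reflexivity.
Qed.

End KernelPairHomogeneity.

Definition kernel_translations_bijective {X Y : Monoid} (g : X -> Y) : Prop :=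
  forall x : X,
    bij_on (fun b => g b = munit) (fun b => g b = g x) (fun b => mop b x) /\
    bij_on (fun b => g b = munit) (fun b => g b = g x) (fun b => mop x b).

Lemma special_homogeneous_surjectionE {X Y : Monoid} {g : X -> Y} :
  is_monoid_hom g -> surjective g ->
  special_homogeneous_surjection g <-> kernel_translations_bijective g.
Proof.
  intros hg sg. split.
  - intros [hg' [_ [_ [_ [_ hom]]]]] x. destruct (hom x) as [R L]. split.
    + apply (kernel_pair_translation_bij hg' (t := fun b => mop b x)) in R;
        [exact R | apply mop1l | reflexivity].
    + apply (kernel_pair_translation_bij hg' (t := fun b => mop x b)) in L;
        [exact L | apply mop1r | reflexivity].
  - intros Hbij. exists hg.
    destruct (kernel_pair_split hg) as (hpi & hdiag & hsec).
    refine (conj sg (conj hpi (conj hdiag (conj hsec _)))).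
    intros x. destruct (Hbij x) as [R L]. split.
    + apply (kernel_pair_translation_bij hg (t := fun b => mop b x));
        [apply mop1l | reflexivity | exact R].
    + apply (kernel_pair_translation_bij hg (t := fun b => mop x b));
        [apply mop1r | reflexivity | exact L].
Qed.

Section PositiveCone.
Context {G H : PreOrdGrp} {f : G -> H} (hf : is_group_hom f)
  (hp : forall x : G, pos x -> pos (f x)).

Lemma fbar_monoid_hom : is_monoid_hom (fbar f hp).
Proof.
  split; [|intros a b]; apply sig_eq_pi; simpl.
  - exact (hom_gzero hf).
  - apply hf.
Qed.

Lemma fbar_right_translation_bij (x : G) (px : pos x) :
  bij_on (fun b => fbar f hp b = munit)
         (fun b => fbar f hp b = fbar f hp (exist _ x px))
         (fun b => mop b (exist _ x px)) <->
  forall y, pos y -> f x = f y -> pos (gadd y (gopp x)).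
Proof.
  split.
  - intros [_ [_ onto]] y py fxy.
    destruct (onto (exist _ y py)) as [b [_ e]].
    { apply sig_eq_pi. symmetry. exact fxy. }
    apply (f_equal (@proj1_sig _ _)) in e. simpl in e.
    rewrite <- e, gaddrK. exact (proj2_sig b).
  - intros Hpos. split; [|split].
    + intros b e. apply (f_equal (@proj1_sig _ _)) in e. simpl in e.
      apply sig_eq_pi. simpl. rewrite hf, e, gadd0l. reflexivity.
    + intros b b' _ _ e. apply (f_equal (@proj1_sig _ _)) in e.
      apply sig_eq_pi. exact (gadd_cancel_r _ _ _ e).
    + intros [y py] e. apply (f_equal (@proj1_sig _ _)) in e. simpl in e.
      exists (exist _ (gadd y (gopp x)) (Hpos y py (eq_sym e))).
      split; apply sig_eq_pi; simpl.
      * rewrite hf, (hom_gopp hf), e, gaddNr. reflexivity.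
      * apply gaddrNK.
Qed.

Lemma fbar_left_translation_bij (x : G) (px : pos x) :
  bij_on (fun b => fbar f hp b = munit)
         (fun b => fbar f hp b = fbar f hp (exist _ x px))
         (fun b => mop (exist _ x px : PosMonoid G) b) <->
  forall y, pos y -> f x = f y -> pos (gadd (gopp x) y).
Proof.
  split.
  - intros [_ [_ onto]] y py fxy.
    destruct (onto (exist _ y py)) as [b [_ e]].
    { apply sig_eq_pi. symmetry. exact fxy. }
    apply (f_equal (@proj1_sig _ _)) in e. simpl in e.
    rewrite <- e, gaddKr. exact (proj2_sig b).
  - intros Hpos. split; [|split].
    + intros b e. apply (f_equal (@proj1_sig _ _)) in e. simpl in e.
      apply sig_eq_pi. simpl. rewrite hf, e, gadd0r. reflexivity.
    + intros b b' _ _ e. apply (f_equal (@proj1_sig _ _)) in e.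
      apply sig_eq_pi. exact (gadd_cancel_l _ _ _ e).
    + intros [y py] e. apply (f_equal (@proj1_sig _ _)) in e. simpl in e.
      exists (exist _ (gadd (gopp x) y) (Hpos y py (eq_sym e))).
      split; apply sig_eq_pi; simpl.
      * rewrite hf, (hom_gopp hf), e, gaddNl. reflexivity.
      * apply gaddNKr.
Qed.

End PositiveCone.

Theorem lemma6p2 (G H : PreOrdGrp) (f : G -> H)
  (hf : is_group_hom f) (hp : forall x : G, pos x -> pos (f x)) :
  (* (f, fbar) is a regular epimorphism in PreOrdGrp *)
  surjective f -> surjective (fbar f hp) ->
  (special_homogeneous_surjection (fbar f hp) <->
   forall x y : G, pos x -> pos y -> f x = f y ->
     pos (gadd y (gopp x)) /\ pos (gadd (gopp x) y)).
Proof.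
  intros _ sfb.
  apply (iff_trans (special_homogeneous_surjectionE (fbar_monoid_hom hf hp) sfb)).
  split.
  - intros Hbij x y px py fxy. destruct (Hbij (exist _ x px)) as [R L].
    split; [apply (proj1 (fbar_right_translation_bij hf hp x px) R)
           | apply (proj1 (fbar_left_translation_bij hf hp x px) L)]; assumption.
  - intros Hpos [x px]. split.
    + apply (fbar_right_translation_bij hf hp x px). intros y py fxy. apply (Hpos x y px py fxy).
    + apply (fbar_left_translation_bij hf hp x px). intros y py fxy. apply (Hpos x y px py fxy).
Qed.
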